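(* Let $d\ge2$ be an integer, let $\nu_d$ be the probability measure on $[-1,1]$ given by $d\nu_d(x)=Z_d^{-1}(1-x^2)^{\frac d2-1}dx$ with $Z_d=\sqrt\pi\,\Gamma(\tfrac d2)/\Gamma(\tfrac{d+1}2)$, set $\nu(x):=1-x^2$, and let $\mathcal L f:=(1-x^2)f''-d\,x\,f'$. For functions $f_1,f_2$ write $\langle f_1,f_2\rangle:=\int_{-1}^1 f_1f_2\,d\nu_d$. Let $2^\sharp:=\frac{2d^2+1}{(d-1)^2}$ and $p\in(2,2^\sharp]$. Then for every positive function $f\in C^2([-1,1])$, \[ \langle\mathcal Lf,\mathcal Lf\rangle+(p-1)\left\langle\frac{|f'|^2}{f}\,\nu,\ \mathcal Lf\right\rangle+d\,\langle f,\mathcal Lf\rangle\ \ge\ 0 . \] *)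

From Stdlib Require Import Reals.
From Coquelicot Require Import Coquelicot.
Open Scope R_scope.

Definition Gamma (s : R) : R :=
  RInt_gen (fun t => Rpower t (s - 1) * exp (- t)) (at_right 0) (Rbar_locally p_infty).

Definition Zd (d : nat) : R :=
  sqrt PI * Gamma (INR d / 2) / Gamma ((INR d + 1) / 2).

(* Density weight (1 - x^2)^(d/2 - 1) = (sqrt (1 - x^2))^(d-2) for d >= 2. *)
Definition weight (d : nat) (x : R) : R := (sqrt (1 - x ^ 2)) ^ (d - 2).

Definition inner (d : nat) (g1 g2 : R -> R) : R :=
  RInt (fun x => / Zd d * weight d x * (g1 x * g2 x)) (-1) 1.

Definition nu (x : R) : R := 1 - x ^ 2.

(* L f = (1 - x^2) f'' - d x f', given f' = f1 and f'' = f2. *)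
Definition Lop (d : nat) (f1 f2 : R -> R) (x : R) : R :=
  (1 - x ^ 2) * f2 x - INR d * x * f1 x.

Definition in_I (x : R) : Prop := -1 <= x <= 1.

Definition is_derive_I (g : R -> R) (x l : R) : Prop :=
  filterlim (fun y => (g y - g x) / (y - x))
    (within (fun y => in_I y /\ y <> x) (locally x)) (locally l).

Definition continuous_I (g : R -> R) (x : R) : Prop :=
  filterlim g (within in_I (locally x)) (locally (g x)).

Definition C2_on_I (f f1 f2 : R -> R) : Prop :=
  (forall x, in_I x -> is_derive_I f x (f1 x)) /\
  (forall x, in_I x -> is_derive_I f1 x (f2 x)) /\
  (forall x, in_I x -> continuous_I f2 x).

Definition two_sharp (d : nat) : R :=
  (2 * INR d ^ 2 + 1) / (INR d - 1) ^ 2.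

(** With the weight [S = (1 - x^2)^(d/2 - 1)], which satisfies
    [(S ν)' = -d x S], the integrand [S (Lf Lf + (p-1) (f'^2/f) ν Lf + d f Lf)]
    is, pointwise on [(-1,1)], the sum of [S ν^2 Q(f'', f'^2/f)] and the
    derivative of an explicit flux containing the factor [ν], which therefore
    vanishes at [±1].  The quadratic form [Q] is nonnegative as soon as
    [p (d-1)^2 <= 2 d^2 + 1], i.e. [p <= 2^#].  As the weight need not be
    differentiable at [±1], the fundamental theorem of calculus is used on the
    open interval and extended to the endpoints by continuity. *)

From Stdlib Require Import Reals Lra Classical.
From Coquelicot Require Import Coquelicot.
Open Scope R_scope.

Lemma is_derive_I_Reals (g : R -> R) (x l : R) : is_derive_I g x l ->
  forall eps, 0 < eps -> exists del, 0 < del /\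
    forall y, in_I y -> y <> x -> Rabs (y - x) < del ->
      Rabs ((g y - g x) / (y - x) - l) < eps.
Proof.
  intros Hg eps Heps.
  destruct (Hg _ (locally_ball l (mkposreal eps Heps))) as [[del Hdel] Hball].
  exists del; split; [exact Hdel |].
  intros y Hy Hyx Hyd; exact (Hball y Hyd (conj Hy Hyx)).
Qed.

Lemma continuous_I_Reals (g : R -> R) (x : R) : continuous_I g x ->
  forall eps, 0 < eps -> exists del, 0 < del /\
    forall y, in_I y -> Rabs (y - x) < del -> Rabs (g y - g x) < eps.
Proof.
  intros Hg eps Heps.
  destruct (Hg _ (locally_ball (g x) (mkposreal eps Heps))) as [[del Hdel] Hball].
  exists del; split; [exact Hdel |].
  intros y Hy Hyd; exact (Hball y Hyd Hy).
Qed.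

Lemma is_derive_I_continuous_I (g : R -> R) (x l : R) :
  is_derive_I g x l -> continuous_I g x.
Proof.
  intros Hg P [eps HP].
  assert (Hl : 0 < Rabs l + 1) by (pose proof (Rabs_pos l); lra).
  destruct (is_derive_I_Reals g x l Hg 1 Rlt_0_1) as [del [Hdel Hq]].
  assert (Hrad : 0 < Rmin del (eps / (Rabs l + 1))).
  { apply Rmin_pos; [lra | apply Rdiv_lt_0_compat; [apply cond_pos | lra]]. }
  exists (mkposreal _ Hrad); intros y Hyd Hy; apply HP.
  change (Rabs (y - x) < Rmin del (eps / (Rabs l + 1))) in Hyd.
  change (Rabs (g y - g x) < eps).
  destruct (Req_dec y x) as [-> | Hyx].
  { rewrite Rminus_diag, Rabs_R0; apply cond_pos. }
  pose proof (Rmin_l del (eps / (Rabs l + 1))) as Hmin1.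
  pose proof (Rmin_r del (eps / (Rabs l + 1))) as Hmin2.
  specialize (Hq y Hy Hyx ltac:(lra)).
  assert (Hquot : Rabs ((g y - g x) / (y - x)) <= Rabs l + 1).
  { pose proof (Rabs_triang_inv ((g y - g x) / (y - x)) l); lra. }
  replace (g y - g x) with ((g y - g x) / (y - x) * (y - x)) by (field; lra).
  rewrite Rabs_mult.
  apply Rle_lt_trans with ((Rabs l + 1) * Rabs (y - x)).
  { apply Rmult_le_compat_r; [apply Rabs_pos | exact Hquot]. }
  apply Rlt_le_trans with ((Rabs l + 1) * (eps / (Rabs l + 1))).
  { apply Rmult_lt_compat_l; lra. }
  right; field; lra.
Qed.

Lemma is_derive_I_interior (g : R -> R) (x l : R) :
  -1 < x < 1 -> is_derive_I g x l -> is_derive g x l.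
Proof.
  intros Hx Hg; apply is_derive_Reals; intros eps Heps.
  destruct (is_derive_I_Reals g x l Hg eps Heps) as [del [Hdel Hq]].
  assert (Hrad : 0 < Rmin del (Rmin (x + 1) (1 - x))) by (repeat apply Rmin_pos; lra).
  exists (mkposreal _ Hrad); intros h Hh Hhd; simpl in Hhd.
  pose proof (Rmin_l del (Rmin (x + 1) (1 - x))).
  pose proof (Rmin_r del (Rmin (x + 1) (1 - x))).
  pose proof (Rmin_l (x + 1) (1 - x)); pose proof (Rmin_r (x + 1) (1 - x)).
  pose proof (Rabs_def2 _ _ Hhd).
  replace h with (x + h - x) at 2 by ring.
  apply Hq; unfold in_I; replace (x + h - x) with h by ring; lra.
Qed.

(** Composing with [clamp] extends a function continuous on [-1,1] to a
    function continuous on [R]; continuity and integrability on [-1,1] are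
    always proved through these extensions. *)
Definition clamp (x : R) : R := Rmax (-1) (Rmin 1 x).

Lemma clamp_in_I (x : R) : in_I (clamp x).
Proof. unfold clamp, in_I, Rmax, Rmin; repeat destruct Rle_dec; lra. Qed.

Lemma clamp_id (x : R) : in_I x -> clamp x = x.
Proof. unfold clamp, in_I, Rmax, Rmin; intros; repeat destruct Rle_dec; lra. Qed.

Lemma clamp_1_lipschitz (x y : R) : Rabs (clamp y - clamp x) <= Rabs (y - x).
Proof.
  unfold clamp, Rmax, Rmin; repeat destruct Rle_dec;
    unfold Rabs; repeat destruct Rcase_abs; lra.
Qed.

Lemma continuity_pt_clamp (x : R) : continuity_pt clamp x.
Proof.
  intros eps Heps; exists eps; split; [exact Heps |]; intros y [_ Hyx]; simpl in *.
  unfold R_dist in *; eapply Rle_lt_trans; [apply clamp_1_lipschitz | exact Hyx].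
Qed.

Lemma locally_clamp_id (x : R) : -1 < x < 1 -> locally x (fun y => clamp y = y).
Proof.
  intros Hx; assert (Hrad : 0 < Rmin (x + 1) (1 - x)) by (apply Rmin_pos; lra).
  exists (mkposreal _ Hrad); intros y Hy.
  change (Rabs (y - x) < Rmin (x + 1) (1 - x)) in Hy; apply Rabs_def2 in Hy.
  pose proof (Rmin_l (x + 1) (1 - x)); pose proof (Rmin_r (x + 1) (1 - x)).
  apply clamp_id; unfold in_I; lra.
Qed.

Lemma continuity_pt_clamp_comp (g : R -> R) :
  (forall x, in_I x -> continuous_I g x) ->
  forall x, continuity_pt (fun y => g (clamp y)) x.
Proof.
  intros Hg x eps Heps.
  destruct (continuous_I_Reals g _ (Hg _ (clamp_in_I x)) eps Heps) as [del [Hdel Hy]].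
  exists del; split; [exact Hdel |]; intros y [_ Hyx]; simpl in *; unfold R_dist in *.
  apply Hy; [apply clamp_in_I | eapply Rle_lt_trans; [apply clamp_1_lipschitz | exact Hyx]].
Qed.

Lemma ex_RInt_clamp (g : R -> R) :
  (forall x, continuity_pt (fun y => g (clamp y)) x) -> ex_RInt g (-1) 1.
Proof.
  intros Hg; apply ex_RInt_ext with (fun y => g (clamp y)).
  - intros x Hx; rewrite Rmin_left in Hx by lra; rewrite Rmax_right in Hx by lra.
    rewrite clamp_id; [reflexivity | unfold in_I; lra].
  - apply (@ex_RInt_continuous R_CompleteNormedModule); intros z _.
    apply continuity_pt_filterlim, Hg.
Qed.

Lemma continuity_pt_cst (c x : R) : continuity_pt (fun _ => c) x.
Proof. apply continuity_pt_const; intros a b; reflexivity. Qed.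

Lemma continuity_pt_pow_comp (g : R -> R) (n : nat) (x : R) :
  continuity_pt g x -> continuity_pt (fun y => g y ^ n) x.
Proof.
  intros Hg; induction n as [| n IH]; simpl.
  - apply continuity_pt_cst.
  - apply continuity_pt_mult; assumption.
Qed.

Lemma continuity_pt_sqrt_comp (g : R -> R) (x : R) :
  continuity_pt g x -> 0 <= g x -> continuity_pt (fun y => sqrt (g y)) x.
Proof. intros Hg Hx; apply (continuity_pt_comp g sqrt x Hg), continuity_pt_sqrt, Hx. Qed.

Lemma continuity_pt_Rabs_comp (g : R -> R) (x : R) :
  continuity_pt g x -> continuity_pt (fun y => Rabs (g y)) x.
Proof. intros Hg; apply (continuity_pt_comp g Rabs x Hg), Rcontinuity_abs. Qed.

Ltac solve_continuity :=
  repeat first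
    [ match goal with H : forall x, continuity_pt _ x |- _ => apply H end
    | apply continuity_pt_cst | apply continuity_pt_id
    | apply continuity_pt_plus | apply continuity_pt_minus | apply continuity_pt_opp
    | apply continuity_pt_mult | apply continuity_pt_div | apply continuity_pt_inv
    | apply continuity_pt_pow_comp | apply continuity_pt_sqrt_comp
    | apply continuity_pt_Rabs_comp
    | solve [cbv beta; auto] ].

Lemma continuity_pt_eq_of_near (F : (R -> Prop) -> Prop) {FF : ProperFilter F}
    (u v : R -> R) (a : R) :
  filter_le F (locally a) -> continuity_pt u a -> continuity_pt v a ->
  F (fun x => u x = v x) -> u a = v a.
Proof.
  intros HF Hu Hv Huv.
  apply (@filterlim_locally_unique R R_AbsRing R_NormedModule F _ u).
  - exact (filterlim_filter_le_1 u HF (proj1 (continuity_pt_filterlim u a) Hu)).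
  - apply (filterlim_ext_loc v).
    + apply (filter_imp _ _ (fun x (H : u x = v x) => eq_sym H) Huv).
    + exact (filterlim_filter_le_1 v HF (proj1 (continuity_pt_filterlim v a) Hv)).
Qed.

Section Interior_FTC.

Variables (H h : R -> R) (a b : R).
Hypotheses (Hab : a < b)
  (H_cont : forall x, continuity_pt H x) (h_cont : forall x, continuity_pt h x)
  (H_derive : forall x, a < x < b -> is_derive H x (h x)).

Let ex_RInt_h (u v : R) : ex_RInt h u v.
Proof.
  apply (@ex_RInt_continuous R_CompleteNormedModule); intros z _.
  apply continuity_pt_filterlim, h_cont.
Qed.

(** The fundamental theorem of calculus when [H] is only known to be
    differentiable inside [(a, b)]: both sides of [RInt h c z = H z - H c]
    are continuous in [z], so the identity extends to the endpoints. *)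
Lemma RInt_interior_derive : RInt h a b = H b - H a.
Proof.
  set (c := (a + b) / 2).
  assert (Hinner : forall z, a < z < b -> RInt h c z = H z - H c).
  { intros z Hz; apply is_RInt_unique, (is_RInt_derive H h c z).
    - intros x Hx; apply H_derive; unfold c, Rmin, Rmax in Hx; destruct Rle_dec in Hx; lra.
    - intros x _; apply continuity_pt_filterlim, h_cont. }
  assert (Hprim : forall z, continuity_pt (fun z => RInt h c z) z).
  { intros z; apply continuity_pt_filterlim, (continuous_RInt_1 h c z).
    apply filter_forall; intros y; apply (@RInt_correct R_CompleteNormedModule), ex_RInt_h. }
  assert (Hdiff : forall z, continuity_pt (fun z => H z - H c) z).
  { intros z; apply continuity_pt_minus; [apply H_cont | apply continuity_pt_cst]. }
  assert (Hrad : 0 < (b - a) / 2) by lra.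
  assert (Hb : RInt h c b = H b - H c).
  { apply (continuity_pt_eq_of_near (at_left b) (fun z => RInt h c z) (fun z => H z - H c) b);
      [apply filter_le_within | apply Hprim | apply Hdiff |].
    exists (mkposreal _ Hrad); intros z Hz Hzb.
    change (Rabs (z - b) < (b - a) / 2) in Hz; apply Rabs_def2 in Hz; apply Hinner; unfold c in *; lra. }
  assert (Ha : RInt h c a = H a - H c).
  { apply (continuity_pt_eq_of_near (at_right a) (fun z => RInt h c z) (fun z => H z - H c) a);
      [apply filter_le_within | apply Hprim | apply Hdiff |].
    exists (mkposreal _ Hrad); intros z Hz Hza.
    change (Rabs (z - a) < (b - a) / 2) in Hz; apply Rabs_def2 in Hz; apply Hinner; unfold c in *; lra. }
  rewrite <- (RInt_Chasles h a c b) by apply ex_RInt_h.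
  rewrite <- (opp_RInt_swap h c a) by apply ex_RInt_h.
  change (- RInt h c a + RInt h c b = H b - H a); rewrite Ha, Hb; ring.
Qed.

Lemma RInt_ge0_nonneg_plus_derive (g P : R -> R) :
  (forall x, continuity_pt P x) -> H a = H b ->
  (forall x, a < x < b -> 0 <= P x) -> (forall x, a < x < b -> g x = P x + h x) ->
  0 <= RInt g a b.
Proof.
  intros P_cont Hflux P_ge0 Hg.
  assert (ex_RInt_P : ex_RInt P a b).
  { apply (@ex_RInt_continuous R_CompleteNormedModule); intros z _.
    apply continuity_pt_filterlim, P_cont. }
  rewrite (RInt_ext g (fun x => P x + h x)).
  2: { intros x Hx; rewrite Rmin_left, Rmax_right in Hx by lra; apply Hg, Hx. }
  change (0 <= RInt (fun x => plus (P x) (h x)) a b).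
  rewrite (RInt_plus P h) by (exact ex_RInt_P || apply ex_RInt_h).
  change (0 <= RInt P a b + RInt h a b).
  rewrite RInt_interior_derive, Hflux, Rminus_diag, Rplus_0_r.
  apply RInt_ge_0; [lra | exact ex_RInt_P | exact P_ge0].
Qed.

End Interior_FTC.

Lemma is_RInt_gen_Gamma_ge0 (s l : R) :
  is_RInt_gen (fun t => Rpower t (s - 1) * exp (- t)) (at_right 0) (Rbar_locally p_infty) l ->
  0 <= l.
Proof.
  intros Hl.
  assert (Hnorm : Rabs l <= l).
  { apply (@RInt_gen_norm R_CompleteNormedModule (at_right 0) (Rbar_locally p_infty) _ _
             (fun t => Rpower t (s - 1) * exp (- t))
             (fun t => Rpower t (s - 1) * exp (- t)) l l); try exact Hl.
    - apply (Filter_prod _ _ _ (fun a => a < 1) (fun b => 1 < b)).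
      + exists (mkposreal 1 Rlt_0_1); intros y Hy _.
        change (Rabs (y - 0) < 1) in Hy; apply Rabs_def2 in Hy; lra.
      + exists 1; intros y Hy; exact Hy.
      + simpl; intros; lra.
    - apply filter_forall; intros [a b] x _.
      apply Req_le, Rabs_pos_eq; left; unfold Rpower; apply Rmult_lt_0_compat; apply exp_pos. }
  pose proof (Rabs_pos l); lra.
Qed.

Lemma Gamma_ge0 (s : R) : 0 <= Gamma s.
Proof.
  set (g := fun t => Rpower t (s - 1) * exp (- t)).
  destruct (classic (exists l, is_RInt_gen g (at_right 0) (Rbar_locally p_infty) l))
    as [[l Hl] | Hdiv].
  - unfold Gamma; fold g; rewrite (is_RInt_gen_unique g l Hl).
    exact (is_RInt_gen_Gamma_ge0 s l Hl).
  - (* junk value: [iota] of an empty predicate is the limit of the trivial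
       filter, whose least upper bound is [p_infty], read back as [0] *)
    unfold Gamma, RInt_gen, iota; fold g.
    change (0 <= R_complete_lim
      (fun A => forall x, is_RInt_gen g (at_right 0) (Rbar_locally p_infty) x -> A x)).
    unfold R_complete_lim; rewrite (is_lub_Rbar_unique _ p_infty); [simpl; lra |].
    assert (Htriv : forall A x, is_RInt_gen g (at_right 0) (Rbar_locally p_infty) x -> A x).
    { intros A x Hx; exfalso; exact (Hdiv (ex_intro _ x Hx)). }
    split; [intros x _; exact I |].
    intros [b | |] Hb; simpl; auto.
    + assert (Hle : b + 1 <= b) by (apply (Hb (b + 1)), Htriv); lra.
    + apply (Hb 0), Htriv.
Qed.

Lemma Zd_inv_ge0 (d : nat) : 0 <= / Zd d.
Proof.
  assert (Hinv : forall x, 0 <= x -> 0 <= / x).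
  { intros x [Hx | <-]; [left; apply Rinv_0_lt_compat, Hx | rewrite Rinv_0; lra]. }
  apply Hinv; unfold Zd; apply Rmult_le_pos.
  - apply Rmult_le_pos; [apply sqrt_pos | apply Gamma_ge0].
  - apply Hinv, Gamma_ge0.
Qed.

Definition quad_form (D p F F1 F2 : R) : R :=
  F2 ^ 2 - 2 * (p - 1) * (D - 1) / (D + 2) * F2 * (F1 ^ 2 / F)
  + (p - 1) * D / (D + 2) * (F1 ^ 2 / F) ^ 2.

(** Completing the square in [F2] leaves [(p - 1) / (D + 2)^2] times
    [D (D + 2) - (p - 1) (D - 1)^2] in front of [(F1^2/F)^2]; this is where
    the exponent [2^# = (2 D^2 + 1) / (D - 1)^2] comes from. *)
Lemma quad_form_ge0 (D p F F1 F2 : R) :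
  1 <= p -> 0 < D + 2 -> p * (D - 1) ^ 2 <= 2 * D ^ 2 + 1 ->
  0 <= quad_form D p F F1 F2.
Proof.
  intros Hp HD Hsharp.
  set (k := (p - 1) * (D - 1) / (D + 2)); set (b := F1 ^ 2 / F).
  replace (quad_form D p F F1 F2)
    with ((F2 - k * b) ^ 2
          + (p - 1) / (D + 2) ^ 2 * (D * (D + 2) - (p - 1) * (D - 1) ^ 2) * b ^ 2)
    by (unfold quad_form, k; fold b; field; lra).
  apply Rplus_le_le_0_compat; [apply pow2_ge_0 |].
  apply Rmult_le_pos; [| apply pow2_ge_0].
  apply Rmult_le_pos; [apply Rdiv_le_0_compat; [lra | apply pow_lt; lra] |].
  replace (D * (D + 2) - (p - 1) * (D - 1) ^ 2) with (2 * D ^ 2 + 1 - p * (D - 1) ^ 2)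
    by ring; lra.
Qed.

Lemma is_derive_sqrt_nu_pow (m : nat) (x : R) : -1 < x < 1 ->
  is_derive (fun y => sqrt (1 - y ^ 2) ^ m) x
    (- INR m * x * sqrt (1 - x ^ 2) ^ m / (1 - x ^ 2)).
Proof.
  intros Hx; auto_derive; [nra |].
  replace (1 + - (x * (x * 1))) with (1 - x ^ 2) by ring.
  assert (Hs : sqrt (1 - x ^ 2) * sqrt (1 - x ^ 2) = 1 - x ^ 2) by (apply sqrt_sqrt; nra).
  assert (Hpos : 0 < sqrt (1 - x ^ 2)) by (apply sqrt_lt_R0; nra).
  destruct m as [| k]; simpl pred.
  - simpl; unfold Rdiv; ring.
  - set (s := sqrt (1 - x ^ 2)) in *; rewrite <- Hs; simpl pow; field; lra.
Qed.

Definition Lpt (D x F1 F2 : R) : R := (1 - x ^ 2) * F2 - D * x * F1.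

Definition integrand (D p x S F F1 F2 : R) : R :=
  S * (Lpt D x F1 F2 * Lpt D x F1 F2)
  + (p - 1) * (S * ((F1 ^ 2 / F * (1 - x ^ 2)) * Lpt D x F1 F2))
  + D * (S * (F * Lpt D x F1 F2)).

Definition nonneg_part (D p x S F F1 F2 : R) : R :=
  S * (1 - x ^ 2) ^ 2 * quad_form D p F F1 F2.

Definition flux (D p x S F F1 : R) : R :=
  S * (1 - x ^ 2) * (D * F * F1 + (p - 1) * F1 ^ 3 * (1 - x ^ 2) / F - D * x * F1 ^ 2)
  - 2 * (p - 1) / (D + 2) * (S * (1 - x ^ 2) ^ 2 * (F1 ^ 3 / F)).

(** The hypothesis on [S] says [(S ν)' = -D x S], the relation that makes
    [L] symmetric with respect to the weight [S]. *)
Lemma is_derive_flux (S f f1 f2 : R -> R) (D p x : R) :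
  D + 2 <> 0 -> f x <> 0 -> 1 - x ^ 2 <> 0 ->
  is_derive S x (- (D - 2) * x * S x / (1 - x ^ 2)) ->
  is_derive f x (f1 x) -> is_derive f1 x (f2 x) ->
  is_derive (fun y => flux D p y (S y) (f y) (f1 y)) x
    (integrand D p x (S x) (f x) (f1 x) (f2 x) - nonneg_part D p x (S x) (f x) (f1 x) (f2 x)).
Proof.
  intros HD Hf Hnu HS Hf0 Hf1; unfold flux; auto_derive.
  - repeat split; auto; eexists; eassumption.
  - replace (Derive (fun y => S y) x) with (- (D - 2) * x * S x / (1 - x ^ 2))
      by (symmetry; apply is_derive_unique, HS).
    replace (Derive (fun y => f y) x) with (f1 x) by (symmetry; apply is_derive_unique, Hf0).
    replace (Derive (fun y => f1 y) x) with (f2 x) by (symmetry; apply is_derive_unique, Hf1).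
    unfold integrand, nonneg_part, quad_form, Lpt; field; auto.
Qed.

Section Main.

Variables (d : nat) (p : R) (f f1 f2 : R -> R).
Hypotheses (Hd : (2 <= d)%nat) (Hp : 2 < p <= two_sharp d)
  (f_derive : forall x, in_I x -> is_derive_I f x (f1 x))
  (f1_derive : forall x, in_I x -> is_derive_I f1 x (f2 x))
  (f2_cont : forall x, in_I x -> continuous_I f2 x)
  (f_pos : forall x, in_I x -> 0 < f x).

Lemma INR_d_ge2 : 2 <= INR d.
Proof. apply (le_INR 2 d) in Hd; simpl in Hd; lra. Qed.

Lemma p_sharp_bound : p * (INR d - 1) ^ 2 <= 2 * INR d ^ 2 + 1.
Proof.
  pose proof INR_d_ge2 as HD; destruct Hp as [_ Hsharp]; unfold two_sharp in Hsharp.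
  apply (Rmult_le_compat_r ((INR d - 1) ^ 2)) in Hsharp; [| apply pow2_ge_0].
  unfold Rdiv in Hsharp; rewrite Rmult_assoc, Rinv_l in Hsharp by (apply pow_nonzero; lra).
  lra.
Qed.

Lemma is_derive_weight (x : R) : -1 < x < 1 ->
  is_derive (weight d) x (- (INR d - 2) * x * weight d x / (1 - x ^ 2)).
Proof.
  intros Hx; unfold weight.
  replace (INR d - 2) with (INR (d - 2)) by (rewrite minus_INR by exact Hd; reflexivity).
  apply is_derive_sqrt_nu_pow, Hx.
Qed.

Lemma f_clamp_cont (x : R) : continuity_pt (fun y => f (clamp y)) x.
Proof.
  apply continuity_pt_clamp_comp; intros y Hy; eapply is_derive_I_continuous_I, f_derive, Hy.
Qed.

Lemma f1_clamp_cont (x : R) : continuity_pt (fun y => f1 (clamp y)) x.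
Proof.
  apply continuity_pt_clamp_comp; intros y Hy; eapply is_derive_I_continuous_I, f1_derive, Hy.
Qed.

Lemma f2_clamp_cont (x : R) : continuity_pt (fun y => f2 (clamp y)) x.
Proof. apply continuity_pt_clamp_comp, f2_cont. Qed.

Lemma f_clamp_neq0 (x : R) : f (clamp x) <> 0.
Proof. pose proof (f_pos _ (clamp_in_I x)); lra. Qed.

Lemma nu_clamp_ge0 (x : R) : 0 <= 1 - clamp x ^ 2.
Proof. destruct (clamp_in_I x); nra. Qed.

Local Hint Resolve continuity_pt_clamp f_clamp_cont f1_clamp_cont f2_clamp_cont
  f_clamp_neq0 nu_clamp_ge0 : core.

Let K (x : R) : R := integrand (INR d) p x (weight d x) (f x) (f1 x) (f2 x).

Lemma RInt_integrand_ge0 : 0 <= RInt K (-1) 1.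
Proof.
  pose proof INR_d_ge2 as HD.
  set (P y := nonneg_part (INR d) p (clamp y) (weight d (clamp y))
                (f (clamp y)) (f1 (clamp y)) (f2 (clamp y))).
  set (H y := flux (INR d) p (clamp y) (weight d (clamp y)) (f (clamp y)) (f1 (clamp y))).
  set (h y := integrand (INR d) p (clamp y) (weight d (clamp y))
                (f (clamp y)) (f1 (clamp y)) (f2 (clamp y)) - P y).
  apply (RInt_ge0_nonneg_plus_derive H h (-1) 1 ltac:(lra)) with (P := P).
  - intros x; unfold H, flux, weight; solve_continuity.
  - intros x; unfold h, P, integrand, nonneg_part, quad_form, Lpt, weight; solve_continuity.
  - intros x Hx; assert (Hxx : in_I x) by (unfold in_I; lra).
    apply (is_derive_ext_loc (fun y => flux (INR d) p y (weight d y) (f y) (f1 y))).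
    { apply (filter_imp (fun y => clamp y = y)); [| exact (locally_clamp_id x Hx)].
      intros y Hy; unfold H; rewrite Hy; reflexivity. }
    unfold h, P; rewrite clamp_id by exact Hxx.
    apply is_derive_flux;
      [lra | pose proof (f_pos x Hxx); lra | nra | apply is_derive_weight, Hx
      | apply is_derive_I_interior, f_derive, Hxx; exact Hx
      | apply is_derive_I_interior, f1_derive, Hxx; exact Hx].
  - intros x; unfold P, nonneg_part, quad_form, weight; solve_continuity.
  - unfold H, flux; rewrite !clamp_id by (unfold in_I; lra); ring.
  - intros x Hx; unfold P, nonneg_part; rewrite clamp_id by (unfold in_I; lra).
    apply Rmult_le_pos; [apply Rmult_le_pos; [apply pow_le, sqrt_pos | apply pow2_ge_0] |].
    apply quad_form_ge0; [lra | lra | exact p_sharp_bound].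
  - intros x Hx; unfold h, P, K; rewrite clamp_id by (unfold in_I; lra); ring.
Qed.

Lemma inner_combination_eq :
  inner d (Lop d f1 f2) (Lop d f1 f2)
  + (p - 1) * inner d (fun x => Rabs (f1 x) ^ 2 / f x * nu x) (Lop d f1 f2)
  + INR d * inner d f (Lop d f1 f2)
  = / Zd d * RInt K (-1) 1.
Proof.
  assert (Hscal : forall g k, ex_RInt g (-1) 1 ->
            k * RInt g (-1) 1 = RInt (fun x => k * g x) (-1) 1).
  { intros g k Hg; symmetry; exact (RInt_scal g (-1) 1 k Hg). }
  assert (Hplus : forall g h, ex_RInt g (-1) 1 -> ex_RInt h (-1) 1 ->
            RInt g (-1) 1 + RInt h (-1) 1 = RInt (fun x => g x + h x) (-1) 1).
  { intros g h Hg Hh; symmetry; exact (RInt_plus g h (-1) 1 Hg Hh). }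
  unfold inner.
  rewrite (Hscal _ (p - 1)), (Hscal _ (INR d)), (Hscal K), Hplus, Hplus;
    try (apply ex_RInt_clamp; intros x;
         unfold K, integrand, Lpt, Lop, weight, nu; solve_continuity).
  apply RInt_ext; intros x _; unfold K, integrand, Lpt, Lop, nu.
  rewrite pow2_abs; match goal with |- ?a = ?b => change (@eq R a b) end; ring.
Qed.

End Main.

Theorem mainTheorem7 (d : nat) (p : R) (f f1 f2 : R -> R) :
  (2 <= d)%nat ->
  2 < p <= two_sharp d ->
  C2_on_I f f1 f2 ->
  (forall x, in_I x -> 0 < f x) ->
  inner d (Lop d f1 f2) (Lop d f1 f2)
  + (p - 1) * inner d (fun x => (Rabs (f1 x)) ^ 2 / f x * nu x) (Lop d f1 f2)
  + INR d * inner d f (Lop d f1 f2) >= 0.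
Proof.
  intros Hd Hp [f_derive [f1_derive f2_cont]] f_pos.
  rewrite inner_combination_eq by assumption.
  apply Rle_ge, Rmult_le_pos; [apply Zd_inv_ge0 | apply RInt_integrand_ge0; assumption].
Qed.
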